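(* Let $f,g\in \mathbb{Z}[\alpha_1^{\pm 1},\ldots,\alpha_r^{\pm 1}]$. Then: (1) There exists a set $K\subset \mathbb{Z}^r$ contained in a finite union of hyperplanes of $\mathbb{R}^r$ such that if $\mathcal N(f)\subset \mathcal N(g)$ then $\mathcal N(f(\xi^s))\subset \mathcal N(g(\xi^s))$ for all $s\in \mathbb{Z}^r\setminus K$. (2) If $K\subset \mathbb{Z}^r$ is contained in a finite union of hyperplanes and $\mathcal N(f(\xi^s))\subset \mathcal N(g(\xi^s))$ for all $s\in \mathbb{Z}^r\setminus K$, then $\mathcal N(f)\subset \mathcal N(g)$. (3) If $K\subset \mathbb{Z}^r$ is contained in a finite union of hyperplanes and $\mathcal N(f)\subsetneq \mathcal N(g)$, then there is an $s\in \mathbb{Z}^r\setminus K$ with $\mathcal N(f(\xi^s))\subsetneq \mathcal N(g(\xi^s))$.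
   Context: For $f\in \mathbb{Z}[\alpha_1^{\pm 1},\ldots,\alpha_r^{\pm 1}]$ the Newton polytope $\mathcal N(f)\subset\mathbb{R}^r$ is the convex hull of the set of exponent vectors $(u_1,\ldots,u_r)\in\mathbb{Z}^r$ such that the coefficient of $\alpha_1^{u_1}\cdots\alpha_r^{u_r}$ in $f$ is nonzero (for a Laurent polynomial in one variable $\xi$ it is a segment in $\mathbb{R}$). For $s=(s_1,\ldots,s_r)\in\mathbb{Z}^r$, the toric substitution $f\mapsto f(\xi^s)$ is the ring homomorphism $\mathbb{Z}[\alpha_1^{\pm1},\ldots,\alpha_r^{\pm1}]\to\mathbb{Z}[\xi^{\pm1}]$, $\alpha_i\mapsto \xi^{s_i}$. *)

From HB Require Import structures.
From mathcomp Require Import all_boot all_order all_algebra.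
From mathcomp Require Import finmap.
From mathcomp Require Import Rstruct.
From Stdlib Require Reals.
Set Implicit Arguments. Unset Strict Implicit. Unset Printing Implicit Defensive.
Import Order.TTheory GRing.Theory Num.Theory.
Local Open Scope ring_scope.
Local Open Scope fset_scope.

Notation R := Rdefinitions.R.

Notation expo r := 'rV[int]_r.

(* A Laurent polynomial in Z[a_1^{+-1},...,a_r^{+-1}]: a finitely supported
   function from exponent vectors to integer coefficients. *)
Definition laurent (r : nat) := {fsfun expo r -> int with 0%R}.

Definition zdot (r : nat) (u s : expo r) : int := \sum_(i < r) u 0 i * s 0 i.

(* Toric substitution a_i |-> xi^{s_i}: a univariate Laurent polynomial,
   exponents in Z^1.  Coefficient of xi^k is the sum of coefficients f u
   over u with <u,s> = k. *)
Definition tsubst (r : nat) (s : expo r) (f : laurent r) : laurent 1 :=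
  [fsfun k in [fset (\row_(i < 1) zdot u s) | u in finsupp f]
     => \sum_(u <- finsupp f | zdot u s == k 0 0) f u].

Definition toR (n : nat) (u : expo n) : 'rV[R]_n := map_mx (fun z : int => z%:~R) u.

Definition newton (n : nat) (f : laurent n) (x : 'rV[R]_n) : Prop :=
  exists lam : expo n -> R,
    [/\ forall u, u \in finsupp f -> 0 <= lam u,
        \sum_(u <- finsupp f) lam u = 1
      & x = \sum_(u <- finsupp f) lam u *: toR u].

Definition newton_sub (n : nat) (f g : laurent n) : Prop :=
  forall x, newton f x -> newton g x.

Definition newton_ssub (n : nat) (f g : laurent n) : Prop :=
  newton_sub f g /\ exists x, newton g x /\ ~ newton f x.

Definition hyperplane (r : nat) (a : 'rV[R]_r) (b : R) (x : 'rV[R]_r) : Prop :=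
  a != 0 /\ \sum_(i < r) a 0 i * x 0 i = b.

Definition in_fin_hyperplanes (r : nat) (K : expo r -> Prop) : Prop :=
  exists H : seq ('rV[R]_r * R),
    (forall ab, ab \in H -> ab.1 != 0) /\
    forall k, K k -> exists2 ab, ab \in H & hyperplane ab.1 ab.2 (toR k).

From HB Require Import structures.
From mathcomp Require Import all_boot all_order all_algebra.
From mathcomp Require Import finmap.
From mathcomp Require Import Rstruct.
From mathcomp Require Import ring lra.
From mathcomp Require Import classical_sets boolp topology normedtype derive.
From mathcomp Require Import Rstruct_topology.
Set Implicit Arguments. Unset Strict Implicit. Unset Printing Implicit Defensive.
Import Order.TTheory GRing.Theory Num.Theory.
Local Open Scope ring_scope.

(* Outside the finitely many hyperplanes <u - w, s> = 0 (u <> w exponents of g)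
   the map u |-> <u, s> is injective on the support of g, so the extreme
   exponents of g in the direction s survive the substitution; since every
   exponent u of f lies in N(g), <u, s> lies between them, which gives (1).
   For (2) and (3), an exponent u of one polynomial outside the Newton polytope
   of the other is strictly separated from it by some direction p (take p to be
   the point of minimal norm of the convex hull of u - w).  The open cone of such
   directions contains integer points s off any finite union of hyperplanes, and
   for them <u, s> lies strictly beyond the other univariate Newton segment. *)

Definition dot (n : nat) (a b : 'rV[R]_n) : R := \sum_i a 0 i * b 0 i.

Lemma dotC n (a b : 'rV[R]_n) : dot a b = dot b a.
Proof. by apply: eq_bigr => i _; rewrite mulrC. Qed.

Lemma dotDl n (a b c : 'rV[R]_n) : dot (a + b) c = dot a c + dot b c.
Proof. by rewrite /dot -big_split; apply: eq_bigr => i _; rewrite mxE mulrDl. Qed.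

Lemma dotZl n k (a c : 'rV[R]_n) : dot (k *: a) c = k * dot a c.
Proof. by rewrite /dot mulr_sumr; apply: eq_bigr => i _; rewrite mxE mulrA. Qed.

Lemma dotBl n (a b c : 'rV[R]_n) : dot (a - b) c = dot a c - dot b c.
Proof. by rewrite dotDl -scaleN1r dotZl mulN1r. Qed.

Lemma dot_suml n (I : Type) (s : seq I) (F : I -> 'rV[R]_n) c :
  dot (\sum_(j <- s) F j) c = \sum_(j <- s) dot (F j) c.
Proof.
elim: s => [|j s IH]; last by rewrite !big_cons dotDl IH.
by rewrite !big_nil /dot big1 // => i _; rewrite mxE mul0r.
Qed.

Lemma dotDr n (a b c : 'rV[R]_n) : dot c (a + b) = dot c a + dot c b.
Proof. by rewrite !(dotC c) dotDl. Qed.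

Lemma dotZr n k (a c : 'rV[R]_n) : dot c (k *: a) = k * dot c a.
Proof. by rewrite !(dotC c) dotZl. Qed.

Lemma dotNr n (a c : 'rV[R]_n) : dot c (- a) = - dot c a.
Proof. by rewrite -scaleN1r dotZr mulN1r. Qed.

Lemma dotBr n (a b c : 'rV[R]_n) : dot c (a - b) = dot c a - dot c b.
Proof. by rewrite !(dotC c) dotBl. Qed.

Lemma dot_ge0 n (a : 'rV[R]_n) : 0 <= dot a a.
Proof. by apply: sumr_ge0 => i _; rewrite -expr2 sqr_ge0. Qed.

Lemma dot_gt0 n (a : 'rV[R]_n) : a != 0 -> 0 < dot a a.
Proof.
move=> a0; rewrite lt_def dot_ge0 andbT; apply: contraNN a0 => /eqP.
move=> /psumr_eq0P a2_eq0; apply/eqP/rowP => i; rewrite mxE; apply/eqP.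
by rewrite -sqrf_eq0 expr2 a2_eq0 // => j _; rewrite -expr2 sqr_ge0.
Qed.

Lemma toRB n (u w : expo n) : toR (u - w) = toR u - toR w.
Proof. by apply/rowP => i; rewrite !mxE intrB. Qed.

Lemma toR_inj n : injective (@toR n).
Proof.
move=> u w /rowP uw; apply/rowP => i.
by have := uw i; rewrite !mxE => /eqP; rewrite eqr_int => /eqP.
Qed.

Lemma dot_toR n (u s : expo n) : dot (toR u) (toR s) = (zdot u s)%:~R.
Proof. by rewrite /zdot rmorph_sum; apply: eq_bigr => i _; rewrite !mxE -intrM. Qed.

Lemma newton_seg n (h : laurent n) u1 u2 (t : R) :
  u1 \in finsupp h -> u2 \in finsupp h -> 0 <= t <= 1 ->
  newton h (t *: toR u1 + (1 - t) *: toR u2).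
Proof.
move=> h1 h2 /andP[t0 t1].
pose kron (u w : expo n) : R := (w == u)%:R.
have sum_kron u : u \in finsupp h ->
    \sum_(w <- finsupp h) kron u w *: toR w = toR u.
  move=> hu; rewrite (bigD1_seq u) ?fset_uniq //= /kron eqxx scale1r big1 ?addr0 //.
  by move=> w /negPf ->; rewrite scale0r.
exists (fun w => t * kron u1 w + (1 - t) * kron u2 w); split.
- move=> w _; apply: addr_ge0; apply: mulr_ge0; rewrite ?subr_ge0 //;
  by rewrite /kron; case: (_ == _).
- have sum_kron1 u : u \in finsupp h -> \sum_(w <- finsupp h) kron u w = 1.
    move=> hu; rewrite (bigD1_seq u) ?fset_uniq //= /kron eqxx big1 ?addr0 //.
    by move=> w /negPf ->.
  by rewrite big_split /= -!mulr_sumr !sum_kron1 // !mulr1 addrC subrK.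
- rewrite -(sum_kron _ h1) -(sum_kron _ h2) !scaler_sumr -big_split /=.
  by apply: eq_bigr => w _; rewrite [RHS]scalerDl !scalerA.
Qed.

Lemma newton_pt n (h : laurent n) u : u \in finsupp h -> newton h (toR u).
Proof.
move=> hu; have := @newton_seg _ h u u 1 hu hu.
by rewrite subrr scale0r addr0 scale1r; apply; rewrite lexx ler01.
Qed.

Lemma seq_argmax (T : eqType) (s : seq T) (F : T -> R) :
  s != [::] -> exists2 x, x \in s & forall y, y \in s -> F y <= F x.
Proof.
elim: s => // x [|y s] IH _.
  by exists x => [|z]; rewrite ?mem_seq1 // => /eqP ->.
have [z zs zmax] := IH isT.
have [Fzx|Fxz] := leP (F z) (F x).
  exists x => [|w]; first exact: mem_head.
  by rewrite inE => /predU1P[-> //|/zmax/le_trans]; apply.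
exists z => [|w]; first by rewrite inE zs orbT.
by rewrite inE => /predU1P[->|/zmax //]; exact: ltW.
Qed.

Lemma newton_bound n (h : laurent n) x p :
  newton h x -> exists2 u, u \in finsupp h & dot x p <= dot (toR u) p.
Proof.
move=> [lam [lam_ge0 lam_sum ->]].
have : finsupp h != [::] :> seq _.
  by apply: contra_eq_neq lam_sum => ->; rewrite big_nil eq_sym oner_neq0.
move=> /(seq_argmax (fun u => dot (toR u) p)) [u hu umax]; exists u => //.
rewrite dot_suml -[leRHS]mul1r -lam_sum mulr_suml big_seq [leRHS]big_seq.
by apply: ler_sum => w hw; rewrite dotZl ler_wpM2l ?lam_ge0 ?umax.
Qed.

Lemma newton_subP n (f g : laurent n) :
  newton_sub f g <-> {in finsupp f, forall u, newton g (toR u)}.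
Proof.
split=> [fg u /newton_pt /fg //|fg x [mu [mu_ge0 mu_sum ->]]].
have /choice[L LP] : forall u, exists lam : expo n -> R, u \in finsupp f ->
    [/\ forall w, w \in finsupp g -> 0 <= lam w, \sum_(w <- finsupp g) lam w = 1
      & toR u = \sum_(w <- finsupp g) lam w *: toR w].
  move=> u; have [/fg[lam ?]|_] := boolP (u \in finsupp f); first by exists lam.
  by exists (fun=> 0).
exists (fun w => \sum_(u <- finsupp f) mu u * L u w); split.
- move=> w hw; rewrite big_seq; apply: sumr_ge0 => u hu.
  by have [L_ge0 _ _] := LP u hu; rewrite mulr_ge0 ?mu_ge0 ?L_ge0.
- rewrite exchange_big /= -mu_sum big_seq [RHS]big_seq; apply: eq_bigr => u hu.
  by have [_ L_sum _] := LP u hu; rewrite -mulr_sumr L_sum mulr1.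
- under [RHS]eq_bigr do rewrite scaler_suml.
  rewrite [RHS]exchange_big /= big_seq [RHS]big_seq; apply: eq_bigr => u hu.
  have [_ _ ->] := LP u hu; rewrite scaler_sumr.
  by apply: eq_bigr => w _; rewrite scalerA.
Qed.

Lemma tsubstE r (s : expo r) (f : laurent r) k :
  tsubst s f k = \sum_(u <- finsupp f | zdot u s == k 0 0) f u.
Proof.
rewrite /tsubst fsfun_fun; case: ifP => // /negP k_notin.
rewrite big1_seq // => u /andP[/eqP uk hu]; case: k_notin.
have -> : k = \row_(i < 1) zdot u s by apply/rowP => i; rewrite ord1 mxE uk.
exact: in_imfset.
Qed.

Lemma tsubst_supp r (s : expo r) (f : laurent r) k :
  k \in finsupp (tsubst s f) -> exists2 u, u \in finsupp f & zdot u s = k 0 0.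
Proof.
rewrite mem_finsupp tsubstE; apply: contra_neqP => no_u.
by rewrite big1_seq // => u /andP[/eqP uk hu]; case: no_u; exists u.
Qed.

Lemma tsubst_supp_inj r (s : expo r) (f : laurent r) u :
  {in finsupp f &, injective (fun u => zdot u s)} -> u \in finsupp f ->
  \row_(i < 1) zdot u s \in finsupp (tsubst s f).
Proof.
move=> inj hu; rewrite mem_finsupp tsubstE mxE big_mkcond (bigD1_seq u) ?fset_uniq //=.
rewrite eqxx big1_seq ?addr0 -?mem_finsupp // => w /andP[wu hw].
by case: eqP => // /inj-/(_ hw hu) /eqP; rewrite (negPf wu).
Qed.

Lemma newton1_seg (h : laurent 1) k1 k2 (y : 'rV[R]_1) :
  k1 \in finsupp h -> k2 \in finsupp h ->
  (k1 0 0)%:~R <= y 0 0 <= (k2 0 0)%:~R -> newton h y.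
Proof.
move=> h1 h2 /andP[a1 a2].
set a : R := (k1 0 0)%:~R in a1 *; set b : R := (k2 0 0)%:~R in a2 *.
have [ab|ba] := ltP a b; last first.
  have -> : y = 1 *: toR k1 + (1 - 1) *: toR k2.
    apply/rowP => i; rewrite ord1 !mxE -/a subrr mul0r addr0 mul1r.
    by apply/eqP; rewrite eq_le a1 (le_trans a2 ba).
  by apply: newton_seg; rewrite ?ler01 ?lexx.
have ba0 : b - a != 0 by rewrite subr_eq0 gt_eqF.
pose t := (b - y 0 0) / (b - a).
have -> : y = t *: toR k1 + (1 - t) *: toR k2.
  by apply/rowP => i; rewrite ord1 !mxE -/a -/b /t; field.
apply: newton_seg => //; apply/andP; split.
  by rewrite divr_ge0 ?subr_ge0 // ltW.
by rewrite ler_pdivrMr ?subr_gt0 // mul1r; lra.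
Qed.

Lemma notin_newton_tsubst r (s : expo r) (h : laurent r) (c : int) :
  (forall w, w \in finsupp h -> zdot w s < c) ->
  ~ newton (tsubst s h) (toR (\row_(i < 1) c)).
Proof.
move=> lt_c /(newton_bound (const_mx 1))[k /tsubst_supp[w hw wk]].
rewrite /dot !big_ord1 !mxE !mulr1 -wk ler_int.
by rewrite leNgt lt_c.
Qed.

Lemma newton_sub_tsubst r (f g : laurent r) s :
  {in finsupp g &, injective (fun u => zdot u s)} ->
  newton_sub f g -> newton_sub (tsubst s f) (tsubst s g).
Proof.
move=> inj /newton_subP fg; apply/newton_subP => k /tsubst_supp[u hu uk].
have [w2 hw2] := newton_bound (toR s) (fg u hu).
have [w1 hw1] := newton_bound (- toR s) (fg u hu).
rewrite !dotNr !dot_toR lerN2 !ler_int => le1 le2.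
apply: newton1_seg (tsubst_supp_inj inj hw1) (tsubst_supp_inj inj hw2) _.
by rewrite !mxE -uk !ler_int le1 le2.
Qed.

Lemma dot_sqr_addZ n (y w : 'rV[R]_n) t :
  dot (y + t *: w) (y + t *: w) = dot y y + t * (2 * dot y w + t * dot w w).
Proof. by rewrite dotDl !dotDr !dotZl !dotZr (dotC w y); ring. Qed.

Lemma first_order_ge0 (b q : R) :
  0 <= q -> (forall t, 0 < t <= 1 -> 0 <= 2 * b + t * q) -> 0 <= b.
Proof.
move=> q_ge0 Hq; rewrite leNgt; apply/negP => b_lt0.
have qb_gt0 : 0 < q - b by lra.
pose t := - b / (q - b).
have t_gt0 : 0 < t by rewrite divr_gt0 // oppr_gt0.
have t_le1 : t <= 1 by rewrite ler_pdivrMr // mul1r; lra.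
have tq : t * q <= - b.
  by rewrite /t mulrAC ler_pdivrMr //; nra.
by have := Hq t; rewrite t_gt0 t_le1 => /(_ isT); lra.
Qed.

Section Gordan.
Local Open Scope classical_set_scope.
Variables (n m : nat) (v : 'I_m -> 'rV[R]_n).

Definition simplex : set 'rV[R]_m :=
  [set l | (forall i, 0 <= l 0 i) /\ \sum_i l 0 i = 1].

Definition comb (l : 'rV[R]_m) : 'rV[R]_n := \sum_i l 0 i *: v i.

Definition delta (j : 'I_m) : 'rV[R]_m := \row_i (i == j)%:R.

Lemma simplex_delta j : simplex (delta j).
Proof.
split=> [i|]; first by rewrite mxE ler0n.
by rewrite (bigD1 j) //= big1 ?mxE ?eqxx ?addr0 // => i /negPf ij; rewrite mxE ij.
Qed.

Lemma simplex_segment c d t : simplex c -> simplex d -> 0 <= t <= 1 ->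
  simplex ((1 - t) *: c + t *: d).
Proof.
move=> [c_ge0 c_sum] [d_ge0 d_sum] /andP[t_ge0 t_le1]; split=> [i|].
  by rewrite !mxE addr_ge0 // mulr_ge0 // subr_ge0.
under eq_bigr do rewrite !mxE.
by rewrite big_split /= -!mulr_sumr c_sum d_sum !mulr1 subrK.
Qed.

Lemma simplex_compact : compact simplex.
Proof.
have box_compact := rV_compact (fun _ : 'I_m => @segment_compact _ (0 : R) 1).
apply: (subclosed_compact _ box_compact) => [|l [l_ge0 l_sum] i /=]; last first.
  rewrite in_itv /= l_ge0 -l_sum (bigD1 i) //= lerDl.
  by apply: sumr_ge0 => j _; exact: l_ge0.
have -> : simplex = \bigcap_i ((fun l => l 0 i) @^-1` [set x | 0 <= x])
    `&` ((fun l => \sum_i l 0 i) @^-1` [set 1]).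
  apply/seteqP; split=> l /= [l_ge0 l_sum]; split=> // i; last exact: l_ge0.
  by move=> _; exact: l_ge0.
apply: closedI.
  apply: closed_bigI => i _.
  apply: preimage_closed; last exact: closed_ge.
  by move=> l _; exact: coord_continuous.
apply: preimage_closed; last exact: closed_eq.
move=> l _.
apply: continuous_big => [|i _]; first exact: (@add_continuous R^o).
exact: coord_continuous.
Qed.

Lemma comb_continuous : continuous comb.
Proof.
apply: continuous_big => [|i _ l]; first exact: add_continuous.
by apply: continuousZr_tmp; exact: coord_continuous.
Qed.

Lemma sqnorm_comb_continuous : continuous (fun l => dot (comb l) (comb l)).
Proof.
apply: continuous_big => [|k _ l]; first exact: (@add_continuous R^o).
have comb_k : {for l, continuous ((fun y : 'rV[R]_n => y 0 k) \o comb)}.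
  by apply: continuous_comp; [exact: comb_continuous | exact: coord_continuous].
exact: (continuousM comb_k comb_k).
Qed.

Lemma comb_segment c j t :
  comb ((1 - t) *: c + t *: delta j) = comb c + t *: (v j - comb c).
Proof.
have -> : v j = comb (delta j).
  rewrite /comb (bigD1 j) //= big1 ?mxE ?eqxx ?scale1r ?addr0 // => i /negPf ij.
  by rewrite mxE ij scale0r.
rewrite /comb scalerBr !scaler_sumr -sumrB -big_split /=.
by apply: eq_bigr => i _; rewrite !mxE !scalerA -scalerBl -scalerDl; congr (_ *: _); ring.
Qed.

Lemma min_sqnorm_comb_le c : simplex c ->
    (forall l, simplex l -> dot (comb c) (comb c) <= dot (comb l) (comb l)) ->
  forall j, dot (comb c) (comb c) <= dot (comb c) (v j).
Proof.
move=> cS cmin j; set y := comb c; set w := v j - y.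
rewrite -subr_ge0 -dotBr -/w.
apply: (@first_order_ge0 _ (dot w w)) => [|t /andP[t_gt0 t_le1]]; first exact: dot_ge0.
have /cmin : simplex ((1 - t) *: c + t *: delta j).
  by apply: simplex_segment cS (simplex_delta j) _; rewrite ltW.
rewrite comb_segment -/y -/w dot_sqr_addZ => le_yy.
by rewrite -(pmulr_rge0 _ t_gt0); lra.
Qed.

Lemma gordan : (forall l, simplex l -> comb l != 0) ->
  exists p, forall i, 0 < dot (v i) p.
Proof.
move=> comb_neq0; have [m0|m_gt0] := posnP m.
  by exists 0 => -[i i_lt]; exfalso; move: i_lt; rewrite m0.
have simplex_neq0 : simplex !=set0.
  by exists (delta (Ordinal m_gt0)); exact: simplex_delta.
have sqnorm_cont : {within simplex, continuous (fun l => dot (comb l) (comb l))}.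
  exact/continuous_subspaceT/sqnorm_comb_continuous.
have [c /set_mem cS cmin] := EVT_min_rV simplex_neq0 simplex_compact sqnorm_cont.
exists (comb c) => i; rewrite dotC.
apply: lt_le_trans (min_sqnorm_comb_le cS _ i); first exact/dot_gt0/comb_neq0.
by move=> l /mem_set /cmin.
Qed.
End Gordan.

Lemma newton_separation n (h : laurent n) x : ~ newton h x ->
  exists p, forall u, u \in finsupp h -> dot (toR u) p < dot x p.
Proof.
move=> x_notin; set U := finsupp h : seq _.
pose v (i : 'I_(size U)) := x - toR (nth 0 U i).
have /gordan[p p_pos] : forall l, simplex l -> comb v l != 0.
  move=> l [l_ge0 l_sum]; apply/eqP => comb0; apply: x_notin.
  pose lam u := oapp (fun i => l 0 i) 0 (insub (index u U)).
  exists lam; split.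
  - by move=> u _; rewrite /lam; case: insub => //=.
  - by rewrite -(big_index_uniq _ _ (fun i => l 0 i)) ?fset_uniq.
  - have comb_eq : comb v l = x - \sum_i l 0 i *: toR (nth 0 U i).
      rewrite /comb /v; under eq_bigr do rewrite scalerBr.
      by rewrite sumrB -scaler_suml l_sum scale1r.
    have -> : x = \sum_i l 0 i *: toR (nth 0 U i).
      by apply/eqP; rewrite -subr_eq0 -comb_eq comb0.
    rewrite (big_index_uniq _ _ (fun i => l 0 i *: toR (nth 0 U i))) ?fset_uniq //.
    rewrite !big_seq; apply: eq_bigr => u hu; rewrite /lam.
    case: insubP => [i _ /= i_eq|]; last by rewrite index_mem hu.
    by congr (_ *: toR _); rewrite -(nth_index 0 hu) -i_eq.
exists p => u hu; have u_idx : (index u U < size U)%N by rewrite index_mem.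
by have := p_pos (Ordinal u_idx); rewrite /v /= nth_index // dotBl subr_gt0.
Qed.

Lemma cone_shift n (D : seq 'rV[R]_n) p v :
  (forall d, d \in D -> 0 < dot d p) ->
  exists2 e : R, 0 < e & forall d, d \in D -> 0 < dot d (p + e *: v).
Proof.
move=> D_pos.
suff [e e_gt0 He] : exists2 e : R, 0 < e &
    forall d, d \in D -> e * `|dot d v| < dot d p.
  exists e => // d hd; rewrite dotDr dotZr.
  have := He d hd; have : - (e * dot d v) <= e * `|dot d v|.
    by rewrite -mulrN ler_wpM2l ?(ltW e_gt0) // -normrN ler_norm.
  lra.
elim: D D_pos => [|d D IH] D_pos; first by exists 1.
have [e1 e1_gt0 He1] := IH (fun d' hd' => D_pos d' (@mem_behead _ (d :: D) d' hd')).
have dp_gt0 : 0 < dot d p := D_pos d (mem_head _ _).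
have dv1_gt0 : 0 < `|dot d v| + 1 by rewrite ltr_wpDl.
pose e2 := dot d p / (`|dot d v| + 1).
have e2_gt0 : 0 < e2 by rewrite divr_gt0.
have e_gt0 : 0 < Num.min e1 e2 by rewrite lt_min e1_gt0.
exists (Num.min e1 e2) => // d'; rewrite inE => /predU1P[->|hd'].
  have : Num.min e1 e2 * (`|dot d v| + 1) <= dot d p.
    by rewrite -ler_pdivlMr // ge_min lexx orbT.
  by rewrite mulrDr mulr1; lra.
apply: le_lt_trans (He1 d' hd'); apply: ler_wpM2r => //.
by rewrite ge_min lexx.
Qed.

Lemma cone_avoid_normals n (A D : seq 'rV[R]_n) p :
  (forall a, a \in A -> a != 0) -> (forall d, d \in D -> 0 < dot d p) ->
  exists q, (forall d, d \in D -> 0 < dot d q) /\ (forall a, a \in A -> dot a q != 0).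
Proof.
elim: A D p => [|a A IH] D p A_neq0 D_pos; first by exists p.
have a_neq0 : a != 0 := A_neq0 a (mem_head _ _).
have [p1 [D_pos1 ap1]] :
    exists p1, (forall d, d \in D -> 0 < dot d p1) /\ dot a p1 != 0.
  have [ap0|] := eqVneq (dot a p) 0; last by exists p.
  have [e e_gt0 He] := cone_shift a D_pos; exists (p + e *: a); split=> //.
  by rewrite dotDr dotZr ap0 add0r mulf_neq0 ?gt_eqF ?dot_gt0.
have [||q [D_posq A_q]] := IH (Num.sg (dot a p1) *: a :: D) p1.
- by move=> a' ha'; apply: A_neq0; rewrite inE ha' orbT.
- move=> d; rewrite inE => /predU1P[->|/D_pos1 //].
  by rewrite dotZl -normrEsg normr_gt0.
exists q; split=> [d hd|a']; first by apply: D_posq; rewrite inE hd orbT.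
rewrite inE => /predU1P[->|/A_q //].
have := D_posq _ (mem_head _ _); rewrite dotZl.
by apply: contraTneq => ->; rewrite mulr0 ltxx.
Qed.

Lemma exists_natr_mul_gt (T : eqType) (D : seq T) (b c : T -> R) :
  (forall d, d \in D -> 0 < c d) ->
  exists N : nat, forall d, d \in D -> b d < N%:R * c d.
Proof.
elim: D => [|d D IH] c_pos; first by exists 0%N.
have [N1 HN1] := IH (fun d' hd' => c_pos d' (@mem_behead _ (d :: D) d' hd')).
have cd_gt0 : 0 < c d := c_pos d (mem_head _ _).
pose N2 := (Num.truncn (b d / c d)).+1.
have HN2 : b d < N2%:R * c d by rewrite -ltr_pdivrMr // truncnS_gt.
exists (maxn N1 N2) => d' hd'.
have cd'_ge0 : 0 <= c d' by apply/ltW/c_pos.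
move: hd'; rewrite inE => /predU1P[->|/HN1 lt_d'].
  by apply: lt_le_trans HN2 _; rewrite ler_wpM2r ?(ltW cd_gt0) // ler_nat leq_maxr.
by apply: lt_le_trans lt_d' _; rewrite ler_wpM2r // ler_nat leq_maxl.
Qed.

Lemma cone_int_point n (D : seq 'rV[R]_n) q (B : R) :
  (forall d, d \in D -> 0 < dot d q) ->
  exists s : expo n, forall d, d \in D -> B < dot d (toR s).
Proof.
move=> D_pos.
have [N HN] := exists_natr_mul_gt (fun d : 'rV[R]_n => B + \sum_i `|d 0 i|) D_pos.
exists (\row_i Num.floor (N%:R * q 0 i)) => d hd.
suff : N%:R * dot d q - \sum_i `|d 0 i| <= dot d (toR (\row_i Num.floor (N%:R * q 0 i))).
  by have := HN d hd; lra.
(* Rounding N q down moves <d, .> by at most sum_i |d_i|. *)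
rewrite -dotZr /dot -sumrB; apply: ler_sum => i _; rewrite !mxE.
set x := N%:R * q 0 i; have := floor_le x; have := floorD1_gt x; rewrite intrD.
move=> x_lt x_ge; rewrite lerBlDr -lerBlDl -mulrBr.
apply: le_trans (ler_norm _) _; rewrite normrM ler_piMr // ler_norml; lra.
Qed.

Lemma cone_avoid_hyperplanes r (K : expo r -> Prop) (D : seq 'rV[R]_r) p :
  in_fin_hyperplanes K -> (forall d, d \in D -> 0 < dot d p) ->
  exists s, ~ K s /\ forall d, d \in D -> 0 < dot d (toR s).
Proof.
move=> [H [H_neq0 K_sub]] D_pos.
(* Orient every normal a to be positive at q; scaling q then pushes <a, s>
   beyond every offset |b|. *)
have [|q [D_posq H_q]] := cone_avoid_normals (A := map fst H) _ D_pos.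
  by move=> a /mapP[ab hab ->]; exact: H_neq0.
pose B := \big[Num.max/0]_(ab <- H) `|ab.2|.
pose sgn (a : 'rV[R]_r) := Num.sg (dot a q) *: a.
have [|s Hs] := cone_int_point B (D := D ++ [seq sgn ab.1 | ab <- H]) (q := q).
  move=> d; rewrite mem_cat => /orP[/D_posq //|/mapP[ab hab ->]].
  by rewrite dotZl -normrEsg normr_gt0 H_q ?map_f.
have B_ge0 : 0 <= B by apply: bigmax_ge_id.
exists s; split=> [/K_sub[ab hab [_ ab_s]]|d hd]; last first.
  by apply: le_lt_trans B_ge0 (Hs d _); rewrite mem_cat hd.
have := Hs (sgn ab.1); rewrite mem_cat (map_f (fun ab => sgn ab.1)) ?orbT // => /(_ isT).
have -> : dot (sgn ab.1) (toR s) = Num.sg (dot ab.1 q) * ab.2 by rewrite dotZl -ab_s.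
apply/negP; rewrite -leNgt.
apply: le_trans (ler_norm _) _; rewrite normrM normr_sg.
have ab2_le : `|ab.2| <= B by apply: le_bigmax_seq hab _.
by apply: le_trans ab2_le; rewrite ler_piMl //; case: (_ != 0).
Qed.

Lemma in_fin_hyperplanesU r (K1 K2 : expo r -> Prop) :
  in_fin_hyperplanes K1 -> in_fin_hyperplanes K2 ->
  in_fin_hyperplanes (fun s => K1 s \/ K2 s).
Proof.
move=> [H1 [H1_neq0 K1_sub]] [H2 [H2_neq0 K2_sub]]; exists (H1 ++ H2); split.
  by move=> ab; rewrite mem_cat => /orP[/H1_neq0|/H2_neq0].
move=> k [/K1_sub|/K2_sub] [ab hab hyp]; exists ab => //; by rewrite mem_cat hab ?orbT.
Qed.

Definition collision r (S : seq (expo r)) (s : expo r) : Prop :=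
  exists u w, [/\ u \in S, w \in S, u != w & zdot u s = zdot w s].

Lemma collisionN_inj r (S : seq (expo r)) s :
  ~ collision S s -> {in S &, injective (fun u => zdot u s)}.
Proof.
move=> no_coll u w hu hw uw; apply/eqP; apply: contraT => u_neq_w.
by case: no_coll; exists u, w.
Qed.

Lemma collision_fin_hyperplanes r (S : seq (expo r)) :
  in_fin_hyperplanes (collision S).
Proof.
pose pairs := [seq uw <- [seq (u, w) | u <- S, w <- S] | uw.1 != uw.2].
exists [seq (toR (uw.1 - uw.2), 0) | uw <- pairs]; split.
  move=> ab /mapP[[u w]]; rewrite mem_filter /= => /andP[uw _] -> /=.
  by apply: contra uw; rewrite toRB subr_eq0 => /eqP/toR_inj ->.
move=> s [u [w [hu hw uw us_ws]]]; exists (toR (u - w), 0).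
  apply/mapP; exists (u, w) => //.
  by rewrite mem_filter uw; apply/allpairsP; exists (u, w).
split; first by rewrite toRB subr_eq0; apply: contra uw => /eqP/toR_inj ->.
by rewrite -[LHS]/(dot _ _) toRB dotBl !dot_toR us_ws subrr.
Qed.

Lemma exists_separating_subst r (K : expo r -> Prop) (S : seq (expo r))
    (h : laurent r) u :
  in_fin_hyperplanes K -> ~ newton h (toR u) ->
  exists s, [/\ ~ K s, {in S &, injective (fun w => zdot w s)}
              & forall w, w \in finsupp h -> zdot w s < zdot u s].
Proof.
move=> hK /newton_separation[p p_sep].
have [|s [Ks s_pos]] := cone_avoid_hyperplanes
    (D := [seq toR u - toR w | w <- finsupp h]) (p := p)
    (in_fin_hyperplanesU hK (collision_fin_hyperplanes S)).
  by move=> _ /mapP[w hw ->]; rewrite dotBl subr_gt0 p_sep.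
exists s; split=> [Ks'||w hw]; first by apply: Ks; left.
  by apply: collisionN_inj => coll; apply: Ks; right.
by have := s_pos _ (map_f _ hw); rewrite dotBl !dot_toR subr_gt0 ltr_int.
Qed.

Theorem proposition3p3 (r : nat) (f g : laurent r) :
  (exists K : expo r -> Prop, in_fin_hyperplanes K /\
     (newton_sub f g -> forall s, ~ K s -> newton_sub (tsubst s f) (tsubst s g)))
  /\
  (forall K : expo r -> Prop, in_fin_hyperplanes K ->
     (forall s, ~ K s -> newton_sub (tsubst s f) (tsubst s g)) ->
     newton_sub f g)
  /\
  (forall K : expo r -> Prop, in_fin_hyperplanes K ->
     newton_ssub f g ->
     exists s, ~ K s /\ newton_ssub (tsubst s f) (tsubst s g)).
Proof.
split; [|split].
- exists (collision (finsupp g)); split; first exact: collision_fin_hyperplanes.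
  by move=> fg s /collisionN_inj inj; exact: newton_sub_tsubst.
- move=> K hK sub; apply/newton_subP => u hu; apply: contrapT => u_notin.
  have [s [Ks inj lt_u]] := exists_separating_subst (finsupp f) hK u_notin.
  exact/(notin_newton_tsubst lt_u)/(sub s Ks)/newton_pt/tsubst_supp_inj.
- move=> K hK [fg [x [gx fx]]].
  have [w0 hw0 w0_notin] : exists2 w0, w0 \in finsupp g & ~ newton f (toR w0).
    apply: contrapT => all_in; apply: fx; move: x gx; apply/newton_subP => w hw.
    by apply: contrapT => w_notin; apply: all_in; exists w.
  have [s [Ks inj lt_w0]] := exists_separating_subst (finsupp g) hK w0_notin.
  exists s; split=> //; split; first exact: newton_sub_tsubst.
  exists (toR (\row_(i < 1) zdot w0 s)); split.
    exact/newton_pt/tsubst_supp_inj.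
  exact: notin_newton_tsubst.
Qed.
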